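(* Let $G$ be a finite group and let $G=G_+G_-$ and $G=G_+'G_-$ be two unique factorizations with the same subgroup $G_-$. Let $\sigma:G_+\to G_-$ be the map with $G_+'=\{\sigma(u)u: u\in G_+\}$ (such a map exists and is unique). Define the linear map $\phi:H(G;G_+',G_-)\to H(G;G_+,G_-)$ by $\phi\{\sigma(u)ux\}'=\{ux\}$ for $u\in G_+$, $x\in G_-$, and \[ T=\sum_{u,v\in G_+}\{u\,\sigma(v)\}\otimes\{v\}\in H(G;G_+,G_-)\otimes H(G;G_+,G_-). \] Then $(\phi,T)$ is a quasi-isomorphism of Hopf algebras from $H(G;G_+',G_-)$ to $H(G;G_+,G_-)$.
   Context: A unique factorization $G=K G_-$ consists of subgroups $K,G_-$ such that every $g\in G$ is uniquely $g=g_Kg_-$ with $g_K\in K$, $g_-\in G_-$; for $u\in K$, $x\in G_-$ define ${}^u x\in G_-$, $u^x\in K$ by $ux=({}^u x)(u^x)$. $H(G;K,G_-)$ is the complex vector space with basis $G$ and Hopf algebra structure: $\{g\}\{h\}=\delta_{g_K^{\,g_-},\,h_K}\{g h_-\}$; unit $1=\sum_{u\in K}\{u\}$; $\Delta\{g\}=\sum_{h\in K}\{g_Kh^{-1}({}^{h}g_-)\}\otimes\{h g_-\}$; $\varepsilon\{g\}=\delta_{g_K,e}$; $S\{g\}=\{g^{-1}\}$. The basis element $g$ is written $\{g\}$ in $H(G;G_+,G_-)$ and $\{g\}'$ in $H(G;G_+',G_-)$. A quasi-isomorphism of Hopf algebras from $H'$ to $H$ is a pair $(\phi,T)$ where $\phi:H'\to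 H$ is an algebra isomorphism and $T\in H\otimes H$ is invertible such that $(\phi\otimes\phi)\Delta'(a)=T\,\Delta(\phi(a))\,T^{-1}$ for all $a\in H'$, $(T\otimes 1)(\Delta\otimes\mathrm{id})T=(1\otimes T)(\mathrm{id}\otimes\Delta)T$, and $(\varepsilon\otimes\mathrm{id})T=(\mathrm{id}\otimes\varepsilon)T=1$. *)

(* The finite group G is the whole carrier of a finGroupType gT;
   Hopf algebra elements are coefficient functions (over algC) on the basis G. *)
From HB Require Import structures.
From mathcomp Require Import all_boot all_algebra all_fingroup all_field.
Set Implicit Arguments. Unset Strict Implicit. Unset Printing Implicit Defensive.
Import GRing.Theory.
Local Open Scope ring_scope.

Section HopfFact.
Variable gT : finGroupType.

Definition unique_fact (K M : {set gT}) : Prop :=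
  forall g : gT, exists! km : gT * gT,
    [/\ km.1 \in K, km.2 \in M & g = (km.1 * km.2)%g].

Definition fK (K M : {set gT}) (g : gT) : gT :=
  odflt 1%g [pick k in K | (k^-1 * g)%g \in M].
Definition fM (K M : {set gT}) (g : gT) : gT := ((fK K M g)^-1 * g)%g.

(* u x = (^u x) (u^x) with ^u x in M, u^x in K *)
Definition lact (K M : {set gT}) (u x : gT) : gT := ((fM K M ((u * x)^-1))^-1)%g.
Definition ract (K M : {set gT}) (u x : gT) : gT := ((fK K M ((u * x)^-1))^-1)%g.

Definition HA := {ffun gT -> algC}.
Definition HA2 := {ffun gT * gT -> algC}.
Definition HA3 := {ffun gT * gT * gT -> algC}.

(* structure constants: {g}{h} = delta_{g_K^{g_-}, h_K} {g h_-} *)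
Definition mulc (K M : {set gT}) (g h z : gT) : algC :=
  ((ract K M (fK K M g) (fM K M g) == fK K M h) && ((g * fM K M h)%g == z))%:R.

Definition mulH (K M : {set gT}) (a b : HA) : HA :=
  [ffun z => \sum_(g : gT) \sum_(h : gT) a g * b h * mulc K M g h z].
Definition unitH (K : {set gT}) : HA := [ffun g => (g \in K)%:R].

Definition mulH2 (K M : {set gT}) (A B : HA2) : HA2 :=
  [ffun z => \sum_(p : gT * gT) \sum_(q : gT * gT)
     A p * B q * mulc K M p.1 q.1 z.1 * mulc K M p.2 q.2 z.2].
Definition unitH2 (K : {set gT}) : HA2 := [ffun z => unitH K z.1 * unitH K z.2].
Definition mulH3 (K M : {set gT}) (A B : HA3) : HA3 :=
  [ffun z => \sum_(p : gT * gT * gT) \sum_(q : gT * gT * gT)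
     A p * B q * mulc K M p.1.1 q.1.1 z.1.1 * mulc K M p.1.2 q.1.2 z.1.2
       * mulc K M p.2 q.2 z.2].

Definition comulc (K M : {set gT}) (g : gT) (p : gT * gT) : algC :=
  \sum_(h in K) (p == ((fK K M g * h^-1 * lact K M h (fM K M g))%g,
                       (h * fM K M g)%g))%:R.
Definition comulH (K M : {set gT}) (a : HA) : HA2 :=
  [ffun p => \sum_(g : gT) a g * comulc K M g p].
Definition counitc (K M : {set gT}) (g : gT) : algC := (fK K M g == 1%g)%:R.

Definition basisH (g : gT) : HA := [ffun x => (x == g)%:R].
Definition mapH2 (f : HA -> HA) (A : HA2) : HA2 :=
  [ffun z => \sum_(p : gT * gT) A p * f (basisH p.1) z.1 * f (basisH p.2) z.2].

(* (Delta (x) id) T, (id (x) Delta) T, T (x) 1, 1 (x) T, (eps (x) id) T, (id (x) eps) T *)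
Definition comul_l (K M : {set gT}) (T : HA2) : HA3 :=
  [ffun z => \sum_(g : gT) T (g, z.2) * comulc K M g z.1].
Definition comul_r (K M : {set gT}) (T : HA2) : HA3 :=
  [ffun z => \sum_(g : gT) T (z.1.1, g) * comulc K M g (z.1.2, z.2)].
Definition tens_r1 (K : {set gT}) (T : HA2) : HA3 := [ffun z => T z.1 * unitH K z.2].
Definition tens_1l (K : {set gT}) (T : HA2) : HA3 :=
  [ffun z => unitH K z.1.1 * T (z.1.2, z.2)].
Definition counit_l (K M : {set gT}) (T : HA2) : HA :=
  [ffun h => \sum_(g : gT) T (g, h) * counitc K M g].
Definition counit_r (K M : {set gT}) (T : HA2) : HA :=
  [ffun g => \sum_(h : gT) T (g, h) * counitc K M h].

Definition quasi_iso (K' K M : {set gT}) (phi : HA -> HA) (T : HA2) : Prop :=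
  [/\
      [/\ (forall (c : algC) (a b : HA),
         phi [ffun x => c * a x + b x] = [ffun x => c * phi a x + phi b x]),
      bijective phi,
      (forall a b, phi (mulH K' M a b) = mulH K M (phi a) (phi b)) &
      phi (unitH K') = unitH K],
      (exists Tinv : HA2,
         [/\ mulH2 K M T Tinv = unitH2 K, mulH2 K M Tinv T = unitH2 K &
             forall a : HA, mapH2 phi (comulH K' M a)
                            = mulH2 K M (mulH2 K M T (comulH K M (phi a))) Tinv]),
      mulH3 K M (tens_r1 K T) (comul_l K M T) = mulH3 K M (tens_1l K T) (comul_r K M T)
    & counit_l K M T = unitH K /\ counit_r K M T = unitH K].

(* phi{sigma(u) u x}' = {u x}, i.e. (phi a)(g) = a(sigma(g_K) g) *)
Definition phiS (K M : {set gT}) (sigma : gT -> gT) (a : HA) : HA :=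
  [ffun g => a (sigma (fK K M g) * g)%g].
Definition TS (K : {set gT}) (sigma : gT -> gT) : HA2 :=
  [ffun p => \sum_(u in K) \sum_(v in K) (p == ((u * sigma v)%g, v))%:R].

End HopfFact.

(* Write twist (u x) = sigma(u) u x for u in G_+, x in G_-: it carries the
   factorization G = G_+ G_- onto G = G_+' G_-, and phi is precomposition with
   twist.  Because G_+' is a subgroup, sigma satisfies the cocycle identity
   sigma(h) ^h(sigma v) = sigma(h^(sigma v) v), and the actions of G_+' are those
   of G_+ conjugated by sigma:
     (sigma(u) u)^x = sigma(u^x) u^x,   ^(sigma(u) u)x = sigma(u) ^u x sigma(u^x)^-1.
   The first formula makes twist intertwine the structure constants of the two
   products, so phi is an algebra isomorphism.  T has inverse
   sum_{u,v} {u sigma(v)^-1} (x) {v}, and every remaining axiom is an identity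
   between coefficients that are sums of indicators over G_+, each collapsing to
   a single term: the twisted actions match T Delta(phi a) T^-1 with
   (phi (x) phi) Delta'(a), and the cocycle identity matches the two sides of the
   twisting condition on T. *)

From mathcomp Require Import all_boot all_algebra all_fingroup all_field.
Set Implicit Arguments. Unset Strict Implicit. Unset Printing Implicit Defensive.
Import GRing.Theory.

Section IndicatorSums.
Local Open Scope ring_scope.
Context {R : pzSemiRingType}.

Lemma sum_indicator_uniq (T : finType) (A : {pred T}) (P : pred T) (e : T) :
  (forall i, i \in A -> P i -> i = e) ->
  \sum_(i in A) (P i)%:R = ((e \in A) && P e)%:R :> R.
Proof.
move=> Pe_uniq; case: (boolP ((e \in A) && P e)) => [/andP[eA Pe] | N].
  rewrite (bigD1 e) //= Pe big1 ?addr0 // => i /andP[iA ne].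
  by case: (boolP (P i)) => // Pi; rewrite (Pe_uniq i iA Pi) eqxx in ne.
rewrite big1 // => i iA; case: (boolP (P i)) => // Pi.
by move: N; rewrite -(Pe_uniq i iA Pi) iA Pi.
Qed.

Lemma sum_delta_mull (T : finType) (e : T) (F : T -> R) :
  \sum_t (t == e)%:R * F t = F e.
Proof.
rewrite (bigD1 e) //= eqxx mul1r big1 ?addr0 // => t /negbTE ->.
exact: mul0r.
Qed.

Lemma sum_delta_image (I T : finType) (A : {pred I}) (f : I -> T) (F : T -> R) :
  \sum_t (\sum_(i in A) (t == f i)%:R) * F t = \sum_(i in A) F (f i).
Proof.
under eq_bigr do rewrite mulr_suml.
by rewrite exchange_big; apply: eq_bigr => i _; exact: sum_delta_mull.
Qed.

Lemma sum_delta_image2 (I J T : finType) (A : {pred I}) (B : {pred J})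
    (c : I -> J -> R) (f : I -> J -> T) (F : T -> R) :
  \sum_t (\sum_(i in A) \sum_(j in B) c i j * (t == f i j)%:R) * F t
  = \sum_(i in A) \sum_(j in B) c i j * F (f i j).
Proof.
under eq_bigr do rewrite mulr_suml; rewrite exchange_big.
apply: eq_bigr => i _; under eq_bigr do rewrite mulr_suml; rewrite exchange_big.
apply: eq_bigr => j _; under eq_bigr do rewrite -mulrA.
by rewrite -mulr_sumr sum_delta_mull.
Qed.

Lemma sum_delta_image3 (I J L T : finType) (A : {pred I}) (B : {pred J}) (C : {pred L})
    (f : I -> J -> L -> T) (F : T -> R) :
  \sum_t (\sum_(i in A) \sum_(j in B) \sum_(k in C) (t == f i j k)%:R) * F t
  = \sum_(i in A) \sum_(j in B) \sum_(k in C) F (f i j k).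
Proof.
under eq_bigr do rewrite mulr_suml; rewrite exchange_big.
apply: eq_bigr => i _; under eq_bigr do rewrite mulr_suml; rewrite exchange_big.
by apply: eq_bigr => j _; exact: sum_delta_image.
Qed.

End IndicatorSums.

Section UniqueFactorization.
Variables (gT : finGroupType) (K M : {group gT}).
Hypothesis ufKM : unique_fact K M.
Local Open Scope group_scope.

Lemma fact_uniq (u x v y : gT) : u \in K -> x \in M -> v \in K -> y \in M ->
  u * x = v * y -> u = v /\ x = y.
Proof.
move=> uK xM vK yM uxy; have [[a b] [_ ab_uniq]] := ufKM (u * x).
have := ab_uniq (u, x) (And3 uK xM erefl).
by move/(_ (v, y) (And3 vK yM uxy)): ab_uniq => -> [].
Qed.

Lemma fact_exists (g : gT) : exists u x, [/\ u \in K, x \in M & g = u * x].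
Proof. by have [[u x] [[/= uK xM ->] _]] := ufKM g; exists u, x. Qed.

Lemma fK_mul (u x : gT) : u \in K -> x \in M -> fK K M (u * x) = u.
Proof.
move=> uK xM; rewrite /fK; case: pickP => [k /andP[kK kM] | /(_ u)] /=.
  by case: (fact_uniq uK xM kK kM (esym (mulKVg k (u * x)))).
by rewrite uK mulKg xM.
Qed.

Lemma fM_mul (u x : gT) : u \in K -> x \in M -> fM K M (u * x) = x.
Proof. by move=> uK xM; rewrite /fM fK_mul // mulKg. Qed.

Lemma mem_fK (g : gT) : fK K M g \in K.
Proof. by have [u [x [uK xM ->]]] := fact_exists g; rewrite fK_mul. Qed.

Lemma mem_fM (g : gT) : fM K M g \in M.
Proof. by have [u [x [uK xM ->]]] := fact_exists g; rewrite fM_mul. Qed.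

Lemma eq1_KM (u : gT) : u \in K -> u \in M -> u = 1.
Proof.
move=> uK uM; have u1 : u * 1 = 1 * u by rewrite mulg1 mul1g.
by case: (fact_uniq uK (group1 M) (group1 K) uM u1).
Qed.

Lemma mem_mulKM (u x : gT) : u \in K -> x \in M -> (u * x \in K) = (x == 1).
Proof.
move=> uK xM; apply/idP/eqP => [uxK | ->]; last by rewrite mulg1.
by case: (fact_uniq uK xM uxK (group1 M) (esym (mulg1 (u * x)))).
Qed.

Lemma fact_uniqMK (m k m' k' : gT) : m \in M -> k \in K -> m' \in M -> k' \in K ->
  m * k = m' * k' -> m = m' /\ k = k'.
Proof.
move=> mM kK m'M k'K mk; have := @fact_uniq k^-1 m^-1 k'^-1 m'^-1.
rewrite !groupV -!invgM mk => /(_ kK mM k'K m'M erefl).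
by case=> /invg_inj-> /invg_inj->.
Qed.

Lemma lact_ractP (u x : gT) :
  [/\ lact K M u x \in M, ract K M u x \in K & u * x = lact K M u x * ract K M u x].
Proof. by rewrite /lact /ract !groupV mem_fM mem_fK -invgM /fM mulKVg invgK. Qed.

Lemma lact_ract_uniq (u x m k : gT) : m \in M -> k \in K -> u * x = m * k ->
  lact K M u x = m /\ ract K M u x = k.
Proof.
move=> mM kK uxmk; rewrite /lact /ract uxmk [(m * k)^-1]invgM.
by rewrite fM_mul ?fK_mul ?groupV // !invgK.
Qed.

Lemma lact_ract1 (u : gT) : u \in K -> lact K M u 1 = 1 /\ ract K M u 1 = u.
Proof. by move=> uK; apply: lact_ract_uniq; rewrite ?mulg1 ?mul1g. Qed.

Lemma ract_injl (u v y : gT) : u \in K -> v \in K -> y \in M ->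
  ract K M u y = ract K M v y -> u = v.
Proof.
move=> uK vK yM ruv; have [luM _ uy] := lact_ractP u y.
have [lvM _ vy] := lact_ractP v y.
have uv_in_M : u * v^-1 \in M.
  have -> : u * v^-1 = (u * y) * (v * y)^-1 by rewrite invgM mulgA mulgK.
  by rewrite uy vy ruv invgM mulgA mulgK; apply: groupM; last rewrite groupV.
by rewrite -(mulgVK v u) (eq1_KM _ uv_in_M) ?mul1g // groupM ?groupV.
Qed.

Section StructureConstants.
Local Open Scope ring_scope.

Lemma mulcE (u x v y z : gT) : u \in K -> x \in M -> v \in K -> y \in M ->
  mulc K M (u * x)%g (v * y)%g z = ((ract K M u x == v) && ((u * x * y)%g == z))%:R.
Proof. by move=> uK xM vK yM; rewrite /mulc !fK_mul ?fM_mul. Qed.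

Lemma mulcE_Kl (u v y z : gT) : u \in K -> v \in K -> y \in M ->
  mulc K M u (v * y)%g z = ((u == v) && ((u * y)%g == z))%:R.
Proof.
move=> uK vK yM; have [_ ru] := lact_ract1 uK.
by rewrite -[u in LHS]mulg1 mulcE // ru mulg1.
Qed.

Lemma mulcE_Kr (u x v z : gT) : u \in K -> x \in M -> v \in K ->
  mulc K M (u * x)%g v z = ((ract K M u x == v) && ((u * x)%g == z))%:R.
Proof. by move=> uK xM vK; rewrite -[v in LHS]mulg1 mulcE // mulg1. Qed.

Lemma mulcE_KK (u v z : gT) : u \in K -> v \in K ->
  mulc K M u v z = ((u == v) && (u == z))%:R.
Proof. by move=> uK vK; rewrite -[v in LHS]mulg1 mulcE_Kl // mulg1. Qed.

Lemma comulcE (u x : gT) p : u \in K -> x \in M ->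
  comulc K M (u * x)%g p =
  \sum_(h in K) (p == ((u * h^-1 * lact K M h x)%g, (h * x)%g))%:R.
Proof. by move=> uK xM; rewrite /comulc fK_mul ?fM_mul. Qed.

Lemma comulcE_K (v : gT) p : v \in K ->
  comulc K M v p = \sum_(h in K) (p == ((v * h^-1)%g, h))%:R.
Proof.
move=> vK; rewrite -[v in LHS]mulg1 comulcE //; apply: eq_bigr => h hK.
by have [-> _] := lact_ract1 hK; rewrite !mulg1.
Qed.

Lemma counitcE (u x : gT) : u \in K -> x \in M -> counitc K M (u * x)%g = (u == 1%g)%:R.
Proof. by move=> uK xM; rewrite /counitc fK_mul. Qed.

Lemma counitcE_K (u : gT) : u \in K -> counitc K M u = (u == 1%g)%:R.
Proof. by move=> uK; rewrite -[u in LHS]mulg1 counitcE. Qed.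

End StructureConstants.

End UniqueFactorization.

Section TensorCoefficients.
Variables (gT : finGroupType) (K M : {group gT}).
Local Open Scope ring_scope.

Lemma sum_TS (tau : gT -> gT) (F : gT * gT -> algC) :
  \sum_p TS K tau p * F p = \sum_(u in K) \sum_(v in K) F ((u * tau v)%g, v).
Proof.
transitivity
  (\sum_p (\sum_(u in K) \sum_(v in K) 1 * (p == ((u * tau v)%g, v))%:R) * F p).
  apply: eq_bigr => p _; rewrite ffunE; congr (_ * _).
  by apply: eq_bigr => u _; apply: eq_bigr => v _; rewrite mul1r.
by rewrite sum_delta_image2; apply: eq_bigr => u _; apply: eq_bigr => v _; rewrite mul1r.
Qed.

Lemma sum_TS_fst (tau : gT -> gT) (F : gT -> algC) (h : gT) :
  \sum_g TS K tau (g, h) * F g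
  = \sum_(u in K) \sum_(v in K) (h == v)%:R * F (u * tau v)%g.
Proof.
under eq_bigr do rewrite ffunE mulr_suml.
under eq_bigr do under eq_bigr do rewrite mulr_suml.
rewrite exchange_big; apply: eq_bigr => u _; rewrite exchange_big.
apply: eq_bigr => v _.
under eq_bigr do rewrite xpair_eqE andbC -mulnb natrM -mulrA.
by rewrite -mulr_sumr sum_delta_mull.
Qed.

Lemma sum_TS_snd (tau : gT -> gT) (F : gT -> algC) (g : gT) :
  \sum_h TS K tau (g, h) * F h
  = \sum_(u in K) \sum_(v in K) (g == u * tau v)%g%:R * F v.
Proof.
under eq_bigr do rewrite ffunE mulr_suml.
under eq_bigr do under eq_bigr do rewrite mulr_suml.
rewrite exchange_big; apply: eq_bigr => u _; rewrite exchange_big.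
apply: eq_bigr => v _.
under eq_bigr do rewrite xpair_eqE -mulnb natrM -mulrA.
by rewrite -mulr_sumr sum_delta_mull.
Qed.

Lemma mulH2E (A B : HA2 gT) z : mulH2 K M A B z =
  \sum_p A p * \sum_q B q * (mulc K M p.1 q.1 z.1 * mulc K M p.2 q.2 z.2).
Proof.
rewrite ffunE; apply: eq_bigr => p _; rewrite mulr_sumr.
by apply: eq_bigr => q _; rewrite !mulrA.
Qed.

Lemma mulH2_sumr (A : HA2 gT) (c : gT -> algC) (B : gT -> HA2 gT) z :
  mulH2 K M A [ffun q => \sum_g c g * B g q] z = \sum_g c g * mulH2 K M A (B g) z.
Proof.
rewrite ffunE; under [RHS]eq_bigr do rewrite ffunE mulr_sumr.
rewrite [RHS]exchange_big; apply: eq_bigr => p _.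
under [RHS]eq_bigr do rewrite mulr_sumr; rewrite [RHS]exchange_big.
apply: eq_bigr => q _; rewrite ffunE mulr_sumr !mulr_suml; apply: eq_bigr => g _.
by rewrite !mulrA [A p * c g]mulrC.
Qed.

Lemma mulH2_suml (B : HA2 gT) (c : gT -> algC) (A : gT -> HA2 gT) z :
  mulH2 K M [ffun p => \sum_g c g * A g p] B z = \sum_g c g * mulH2 K M (A g) B z.
Proof.
rewrite ffunE; under [RHS]eq_bigr do rewrite ffunE mulr_sumr.
rewrite [RHS]exchange_big; apply: eq_bigr => p _.
under [RHS]eq_bigr do rewrite mulr_sumr; rewrite [RHS]exchange_big.
apply: eq_bigr => q _; rewrite ffunE !mulr_suml; apply: eq_bigr => g _.
by rewrite !mulrA.
Qed.

Definition mulc3 (p q z : gT * gT * gT) : algC :=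
  mulc K M p.1.1 q.1.1 z.1.1 * mulc K M p.1.2 q.1.2 z.1.2 * mulc K M p.2 q.2 z.2.

Lemma mulH3_indicator_sums (f g : gT -> gT -> gT -> gT * gT * gT) (A B : HA3 gT) z :
  (forall p, A p = \sum_(i in K) \sum_(j in K) \sum_(k in K) (p == f i j k)%:R) ->
  (forall q, B q = \sum_(i in K) \sum_(j in K) \sum_(k in K) (q == g i j k)%:R) ->
  mulH3 K M A B z = \sum_(i in K) \sum_(j in K) \sum_(k in K)
     \sum_(i' in K) \sum_(j' in K) \sum_(k' in K) mulc3 (f i j k) (g i' j' k') z.
Proof.
move=> AE BE; rewrite ffunE.
transitivity (\sum_p A p * \sum_q B q * mulc3 p q z).
  apply: eq_bigr => p _; rewrite mulr_sumr.
  by apply: eq_bigr => q _; rewrite /mulc3 !mulrA.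
under eq_bigr do rewrite AE; rewrite sum_delta_image3.
do 3!apply: eq_bigr => ? _.
by under eq_bigr do rewrite BE; rewrite sum_delta_image3.
Qed.

Hypothesis ufKM : unique_fact K M.

Lemma mulH2_TS_inv (t1 t2 : gT -> gT) :
  (forall v, v \in K -> t1 v \in M) -> (forall v, v \in K -> t2 v \in M) ->
  (forall v, v \in K -> t1 v * t2 v = 1)%g ->
  mulH2 K M (TS K t1) (TS K t2) = unitH2 K.
Proof.
move=> t1M t2M t12; apply/ffunP => -[z1 z2]; rewrite mulH2E sum_TS !ffunE /=.
under eq_bigr do under eq_bigr do rewrite sum_TS /=.
have inner u v : u \in K -> v \in K ->
  \sum_(u' in K) \sum_(v' in K)
     (mulc K M (u * t1 v)%g (u' * t2 v')%g z1 * mulc K M v v' z2)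
  = ((u == z1) && (v == z2))%:R.
  move=> uK vK; have [_ ruK _] := lact_ractP ufKM u (t1 v).
  rewrite (eq_bigr (fun u' => [&& ract K M u (t1 v) == u', u == z1 & v == z2]%:R));
    last first.
    move=> u' u'K; pose P v' := [&& ract K M u (t1 v) == u', (u * t1 v * t2 v' == z1)%g,
                                    v == v' & v == z2].
    rewrite (eq_bigr (fun v' => (P v')%:R)) => [|v' v'K]; last first.
      by rewrite (mulcE ufKM) ?t1M ?t2M // (mulcE_KK ufKM) // -natrM mulnb -andbA.
    rewrite (sum_indicator_uniq (e := v)) => [|v' _ /and4P[_ _ /eqP ->] //].
    by rewrite /P vK eqxx -mulgA t12 // mulg1.
  rewrite (sum_indicator_uniq (e := ract K M u (t1 v))) => [|u' _ /and3P[/eqP ->] //].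
  by rewrite ruK eqxx.
rewrite (eq_bigr (fun u => ((z2 \in K) && (u == z1))%:R)) => [|u uK]; last first.
  rewrite (eq_bigr _ (fun v vK => inner u v uK vK)).
  by rewrite (sum_indicator_uniq (e := z2)) => [|v _ /andP[_ /eqP]]; rewrite ?eqxx ?andbT.
rewrite (sum_indicator_uniq (e := z1)) => [|u _ /andP[_ /eqP] //].
by rewrite eqxx andbT -natrM mulnb andbC.
Qed.

End TensorCoefficients.

Section Twist.
Variables (gT : finGroupType) (K K' M : {group gT}) (sigma : gT -> gT).
Hypotheses (ufKM : unique_fact K M) (ufK'M : unique_fact K' M).
Hypothesis sigmaM : forall u, u \in K -> sigma u \in M.
Hypothesis K'E : (K' : {set gT}) = [set (sigma u * u)%g | u in K].
Local Notation phi := (phiS K M sigma).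
Local Notation T := (TS K sigma).
Local Notation Tinv := (TS K (fun v => (sigma v)^-1)%g).
Local Open Scope group_scope.

Lemma mem_twistK' (u : gT) : u \in K -> sigma u * u \in K'.
Proof. by move=> uK; rewrite K'E; apply/imsetP; exists u. Qed.

Lemma memK'P (k : gT) : k \in K' -> exists2 u, u \in K & k = sigma u * u.
Proof. by rewrite K'E => /imsetP. Qed.

Lemma twistK_inj (u v : gT) : u \in K -> v \in K ->
  sigma u * u = sigma v * v -> u = v.
Proof. by move=> uK vK /(fact_uniqMK ufKM (sigmaM uK) uK (sigmaM vK) vK) []. Qed.

Lemma sigma1 : sigma 1 = 1.
Proof.
apply: (eq1_KM ufK'M); last exact: sigmaM.
by have := mem_twistK' (group1 K); rewrite mulg1.
Qed.

Lemma sum_K' (R : pzSemiRingType) (F : gT -> R) :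
  (\sum_(k in K') F k = \sum_(u in K) F (sigma u * u)%g)%R.
Proof. by rewrite K'E big_imset //= => u v uK vK /twistK_inj->. Qed.

Definition twist (g : gT) : gT := sigma (fK K M g) * g.

Lemma twistE (u x : gT) : u \in K -> x \in M -> twist (u * x) = sigma u * u * x.
Proof. by move=> uK xM; rewrite /twist fK_mul // mulgA. Qed.

Lemma twist_inj : injective twist.
Proof.
move=> g h; have [u [x [uK xM ->]]] := fact_exists ufKM g.
have [v [y [vK yM ->]]] := fact_exists ufKM h; rewrite !twistE // => uxvy.
by case: (fact_uniq ufK'M (mem_twistK' uK) xM (mem_twistK' vK) yM uxvy)
  => /twistK_inj-> // ->.
Qed.

Lemma lact_ract_twist (u x : gT) : u \in K -> x \in M ->
  lact K' M (sigma u * u) x = sigma u * lact K M u x * (sigma (ract K M u x))^-1 /\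
  ract K' M (sigma u * u) x = sigma (ract K M u x) * ract K M u x.
Proof.
move=> uK xM; have [lM rK ux] := lact_ractP ufKM u x.
apply: (lact_ract_uniq ufK'M); last by rewrite mulgA mulgKV -!mulgA -ux.
- by apply: groupM; [exact: groupM (sigmaM uK) lM | exact/groupVr/sigmaM].
- exact: mem_twistK'.
Qed.

(* Closure of K' under products, read through the factorization G = M K. *)
Lemma sigma_cocycle (h v : gT) : h \in K -> v \in K ->
  sigma h * lact K M h (sigma v) = sigma (ract K M h (sigma v) * v).
Proof.
move=> hK vK; have [lM rK hv] := lact_ractP ufKM h (sigma v).
have /memK'P[w wK hvw] : sigma h * h * (sigma v * v) \in K'.
  by rewrite groupM ?mem_twistK'.
have mk : sigma h * lact K M h (sigma v) * (ract K M h (sigma v) * v) = sigma w * w.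
  by rewrite -hvw !mulgA -[sigma h * h * sigma v]mulgA hv !mulgA.
by case: (fact_uniqMK ufKM (groupM (sigmaM hK) lM) (groupM rK vK) (sigmaM wK) wK mk)
  => -> ->.
Qed.

Section Transport.
Local Open Scope ring_scope.

Lemma phiSE (a : HA gT) (g : gT) : phi a g = a (twist g).
Proof. by rewrite ffunE. Qed.

Lemma phiS_linear (c : algC) (a b : HA gT) :
  phi [ffun x => c * a x + b x] = [ffun x => c * phi a x + phi b x].
Proof. by apply/ffunP => g; rewrite !ffunE. Qed.

Lemma phiS_bij : bijective phi.
Proof.
exists (fun a : HA gT => [ffun g => a (invF twist_inj g)]) => a; apply/ffunP => g.
  by rewrite ffunE phiSE f_invF.
by rewrite phiSE ffunE invF_f.
Qed.

Lemma mulc_twist (g h z : gT) :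
  mulc K' M (twist g) (twist h) (twist z) = mulc K M g h z.
Proof.
have [u [x [uK xM ->]]] := fact_exists ufKM g.
have [v [y [vK yM ->]]] := fact_exists ufKM h.
have [_ rK _] := lact_ractP ufKM u x.
rewrite !twistE // (mulcE ufK'M) ?mem_twistK' // (mulcE ufKM) //.
have [_ ->] := lact_ract_twist uK xM.
rewrite -mulgA -(twistE uK (groupM xM yM)) (inj_eq twist_inj) mulgA.
by congr ((_ && _)%:R); apply/eqP/eqP => [/twistK_inj-> | ->].
Qed.

Lemma phiS_mul (a b : HA gT) : phi (mulH K' M a b) = mulH K M (phi a) (phi b).
Proof.
apply/ffunP => z; rewrite phiSE !ffunE (reindex_inj twist_inj).
apply: eq_bigr => g _; rewrite (reindex_inj twist_inj); apply: eq_bigr => h _.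
by rewrite !phiSE mulc_twist.
Qed.

Lemma phiS_unit : phi (unitH K') = unitH K.
Proof.
apply/ffunP => g; have [u [x [uK xM ->]]] := fact_exists ufKM g.
rewrite phiSE !ffunE twistE // (mem_mulKM ufK'M) ?mem_twistK' //.
by rewrite (mem_mulKM ufKM).
Qed.

Lemma mapH2_phiS (A : HA2 gT) (z1 z2 : gT) :
  mapH2 phi A (z1, z2) = A (twist z1, twist z2).
Proof.
rewrite ffunE (bigD1 (twist z1, twist z2)) //= !phiSE !ffunE !eqxx !mulr1.
rewrite big1 ?addr0 // => -[p1 p2]; rewrite xpair_eqE negb_and !phiSE !ffunE /=.
by case/orP => /negbTE; rewrite eq_sym => ->; rewrite ?mulr0 ?mul0r.
Qed.

End Transport.

Section TwistingTensor.
Local Open Scope ring_scope.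

Lemma counit_l_TS : counit_l K M T = unitH K.
Proof.
apply/ffunP => h; rewrite !ffunE sum_TS_fst.
rewrite (eq_bigr (fun u => ((h \in K) && (u == 1%g))%:R)) => [|u uK]; last first.
  rewrite (eq_bigr (fun v => ((h == v) && (u == 1%g))%:R)) => [|v vK]; last first.
    by rewrite (counitcE ufKM uK (sigmaM vK)) -natrM mulnb.
  by rewrite (sum_indicator_uniq (e := h)) => [|v _ /andP[/eqP->]]; rewrite ?eqxx.
rewrite (sum_indicator_uniq (e := 1%g)) => [|u _ /andP[_ /eqP]] //.
by rewrite group1 eqxx andbT.
Qed.

Lemma counit_r_TS : counit_r K M T = unitH K.
Proof.
apply/ffunP => g; rewrite !ffunE sum_TS_snd.
rewrite (eq_bigr (fun u => (g == u)%:R)) => [|u uK]; last first.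
  rewrite (eq_bigr (fun v => ((g == u * sigma v)%g && (v == 1%g))%:R)) => [|v vK]; last first.
    by rewrite (counitcE_K ufKM vK) -natrM mulnb.
  rewrite (sum_indicator_uniq (e := 1%g)) => [|v _ /andP[_ /eqP] //].
  by rewrite group1 eqxx sigma1 mulg1 andbT.
by rewrite (sum_indicator_uniq (e := g)) => [|u _ /eqP] //; rewrite eqxx andbT.
Qed.

Lemma TS_invertible : mulH2 K M T Tinv = unitH2 K /\ mulH2 K M Tinv T = unitH2 K.
Proof.
have sigmaVM v : v \in K -> ((sigma v)^-1 \in M)%g by move/sigmaM; rewrite groupV.
by split; apply: (mulH2_TS_inv ufKM) => // v vK; rewrite ?mulgV ?mulVg.
Qed.

Lemma mulH2_TS_comulc (u x : gT) w : u \in K -> x \in M ->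
  mulH2 K M T [ffun q => comulc K M (u * x)%g q] w =
  \sum_(h in K) \sum_(a in K) (ract K M a (sigma h) == (u * h^-1)%g)%:R *
     (w == ((a * sigma h * lact K M h x)%g, (h * x)%g))%:R.
Proof.
move=> uK xM; case: w => w1 w2; rewrite mulH2E sum_TS.
under eq_bigr do under eq_bigr do
  (under eq_bigr do rewrite ffunE (comulcE ufKM _ uK xM); rewrite sum_delta_image /=).
under eq_bigr do rewrite exchange_big; rewrite exchange_big.
apply: eq_bigr => h hK; apply: eq_bigr => a aK; have [lM _ _] := lact_ractP ufKM h x.
pose P v := [&& ract K M a (sigma v) == (u * h^-1)%g,
               (a * sigma v * lact K M h x)%g == w1, v == h & (v * x)%g == w2].
rewrite (eq_bigr (fun v => (P v)%:R)) => [|v vK]; last first.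
  rewrite (mulcE ufKM _ aK (sigmaM vK) (groupM uK (groupVr hK)) lM).
  by rewrite (mulcE_Kl ufKM _ vK hK xM) -natrM mulnb -andbA.
rewrite (sum_indicator_uniq (e := h)) => [|v _ /and4P[_ _ /eqP] //].
by rewrite /P hK eqxx -natrM mulnb xpair_eqE /= [w1 == _]eq_sym [w2 == _]eq_sym.
Qed.

(* Both (phi (x) phi) Delta'{sigma(u) u x}' and T Delta{u x} T^-1, evaluated at
   (z1, z2), are sums of these indicators over (h, a); on the Delta' side a is the
   G_+-part of sigma(u) u (sigma(h) h)^-1, an element of G_+'. *)
Definition conj_term (u x z1 z2 h a : gT) : bool :=
  [&& ract K M a (sigma h) == (u * h^-1)%g,
      (a * (sigma h * lact K M h x) * (sigma (ract K M h x))^-1)%g == z1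
    & (h * x)%g == z2].

Lemma conj_TS_comulc (u x z1 z2 : gT) : u \in K -> x \in M ->
  mulH2 K M (mulH2 K M T [ffun q => comulc K M (u * x)%g q])
     Tinv (z1, z2) =
  \sum_(h in K) \sum_(a in K) (conj_term u x z1 z2 h a)%:R.
Proof.
move=> uK xM; rewrite mulH2E.
under eq_bigr => w _ do rewrite (mulH2_TS_comulc w uK xM).
rewrite sum_delta_image2; apply: eq_bigr => h hK; apply: eq_bigr => a aK.
have [lM rK _] := lact_ractP ufKM h x.
have [_ raK _] := lact_ractP ufKM a (sigma h * lact K M h x).
rewrite sum_TS /= -mulgA.
pose P b v := [&& ract K M a (sigma h * lact K M h x) == b,
                  (a * (sigma h * lact K M h x) * (sigma v)^-1)%g == z1,
                  ract K M h x == v & (h * x)%g == z2].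
rewrite (eq_bigr (fun b => \sum_(v in K) (P b v)%:R)) => [|b bK]; last first.
  apply: eq_bigr => v vK; have sigmaVM := groupVr (sigmaM vK).
  rewrite (mulcE ufKM _ aK (groupM (sigmaM hK) lM) bK sigmaVM).
  by rewrite (mulcE_Kr ufKM _ hK xM vK) -natrM mulnb -andbA.
rewrite (eq_bigr (fun b => (P b (ract K M h x))%:R)) => [|b _]; last first.
  rewrite (sum_indicator_uniq (e := ract K M h x)) => [|v _ /and4P[_ _ /eqP] //].
  by rewrite rK.
rewrite (sum_indicator_uniq (e := ract K M a (sigma h * lact K M h x)));
  last by move=> b _ /and4P[/eqP].
by rewrite raK /P !eqxx /= -natrM mulnb.
Qed.

Lemma comulc_twist (u x z1 z2 : gT) : u \in K -> x \in M ->
  comulc K' M (twist (u * x)) (twist z1, twist z2) =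
  \sum_(h in K) \sum_(a in K) (conj_term u x z1 z2 h a)%:R.
Proof.
move=> uK xM; rewrite twistE // (comulcE ufK'M _ (mem_twistK' uK) xM) sum_K'.
apply: eq_bigr => h hK; have [-> _] := lact_ract_twist hK xM.
have [lM rK _] := lact_ractP ufKM h x.
have /memK'P[a aK uha] : (sigma u * u * (sigma h * h)^-1 \in K')%g.
  by rewrite groupM ?groupV ?mem_twistK'.
have ra : ract K M a (sigma h) = (u * h^-1)%g.
  have [] // := lact_ract_uniq ufKM (u := a) (x := sigma h)
    (m := ((sigma a)^-1 * sigma u)%g) (k := (u * h^-1)%g).
  - by rewrite groupM ?groupV ?sigmaM.
  - by rewrite groupM ?groupV.
  by rewrite -[a in LHS](mulKg (sigma a)) -uha invgM !mulgA mulgVK.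
rewrite (sum_indicator_uniq (e := a)) => [|b bK /and3P[/eqP rb _ _]]; last first.
  by apply: (ract_injl ufKM bK aK (sigmaM hK)); rewrite rb ra.
have mM : (sigma h * lact K M h x * (sigma (ract K M h x))^-1 \in M)%g.
  by apply: groupM; [exact: groupM (sigmaM hK) lM | exact/groupVr/sigmaM].
rewrite uha -(twistE aK mM) -(twistE hK xM) xpair_eqE !(inj_eq twist_inj).
by rewrite /conj_term aK ra eqxx /= !mulgA [z1 == _]eq_sym [z2 == _]eq_sym.
Qed.

Lemma phiS_comul (a : HA gT) :
  mapH2 phi (comulH K' M a) =
  mulH2 K M (mulH2 K M T (comulH K M (phi a))) Tinv.
Proof.
apply/ffunP => -[z1 z2]; rewrite mapH2_phiS ffunE (reindex_inj twist_inj) /=.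
have -> : comulH K M (phi a) =
    [ffun q => \sum_g a (twist g) * [ffun q => comulc K M g q] q].
  by apply/ffunP => q; rewrite !ffunE; apply: eq_bigr => g _; rewrite phiSE ffunE.
have -> : mulH2 K M T [ffun q => \sum_g a (twist g) * [ffun q => comulc K M g q] q] =
    [ffun w => \sum_g a (twist g) * mulH2 K M T [ffun q => comulc K M g q] w].
  by apply/ffunP => w; rewrite mulH2_sumr ffunE.
rewrite mulH2_suml; apply: eq_bigr => g _; congr (_ * _).
have [u [x [uK xM ->]]] := fact_exists ufKM g.
by rewrite comulc_twist // conj_TS_comulc.
Qed.

Lemma tens_r1_TS p : tens_r1 K T p =
  \sum_(a in K) \sum_(b in K) \sum_(c in K) (p == ((a * sigma b)%g, b, c))%:R.
Proof.
case: p => p1 p2; rewrite !ffunE /= mulr_suml; apply: eq_bigr => a _.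
rewrite mulr_suml; apply: eq_bigr => b _.
under eq_bigr do rewrite xpair_eqE.
rewrite (sum_indicator_uniq (e := p2)) => [|c _ /andP[_ /eqP->] //].
by rewrite -natrM mulnb eqxx andbT andbC.
Qed.

Lemma comul_l_TS q : comul_l K M T q =
  \sum_(v in K) \sum_(h in K) \sum_(u in K)
     (q == ((u * h^-1 * lact K M h (sigma v))%g, (h * sigma v)%g, v))%:R.
Proof.
case: q => q1 q2; rewrite ffunE /= sum_TS_fst.
transitivity (\sum_(u in K) \sum_(v in K) \sum_(h in K)
   ((q1, q2) == ((u * h^-1 * lact K M h (sigma v))%g, (h * sigma v)%g, v))%:R : algC).
  apply: eq_bigr => u uK; apply: eq_bigr => v vK.
  rewrite (comulcE ufKM _ uK (sigmaM vK)) mulr_sumr; apply: eq_bigr => h _.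
  by rewrite -natrM mulnb xpair_eqE andbC.
by rewrite exchange_big; apply: eq_bigr => v _; rewrite exchange_big.
Qed.

Lemma tens_1l_TS p : tens_1l K T p =
  \sum_(c in K) \sum_(a in K) \sum_(b in K) (p == (c, (a * sigma b)%g, b))%:R.
Proof.
case: p => [[p11 p12] p2]; rewrite !ffunE /= [RHS]exchange_big.
under [RHS]eq_bigr do rewrite exchange_big.
rewrite mulr_sumr; apply: eq_bigr => a _; rewrite mulr_sumr; apply: eq_bigr => b _.
rewrite (sum_indicator_uniq (e := p11)) => [|c _]; last first.
  by rewrite !xpair_eqE => /andP[/andP[/eqP]].
by rewrite -natrM mulnb !xpair_eqE eqxx /= andbA.
Qed.

Lemma comul_r_TS q : comul_r K M T q =
  \sum_(k in K) \sum_(v in K) \sum_(u in K)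
     (q == ((u * sigma v)%g, (v * k^-1)%g, k))%:R.
Proof.
case: q => [[q11 q12] q2]; rewrite ffunE /= sum_TS_snd.
transitivity (\sum_(u in K) \sum_(v in K) \sum_(k in K)
   ((q11, q12, q2) == ((u * sigma v)%g, (v * k^-1)%g, k))%:R : algC).
  apply: eq_bigr => u uK; apply: eq_bigr => v vK.
  rewrite (comulcE_K ufKM _ vK) mulr_sumr; apply: eq_bigr => k _.
  by rewrite -natrM mulnb !xpair_eqE andbA.
rewrite exchange_big; under eq_bigr do rewrite exchange_big.
by rewrite exchange_big.
Qed.

Lemma cocycle_lhs_coeff (a b c : gT) z : a \in K -> b \in K -> c \in K ->
  \sum_(v in K) \sum_(h in K) \sum_(u in K)
    mulc3 K M ((a * sigma b)%g, b, c)
      ((u * h^-1 * lact K M h (sigma v))%g, (h * sigma v)%g, v) z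
  = [&& (a * sigma b * lact K M b (sigma c))%g == z.1.1, (b * sigma c)%g == z.1.2
      & c == z.2]%:R.
Proof.
move=> aK bK cK; case: z => [[z11 z12] z2] /=.
have [_ rK _] := lact_ractP ufKM a (sigma b).
pose P v h u := [&& ract K M a (sigma b) == (u * h^-1)%g,
  (a * sigma b * lact K M h (sigma v))%g == z11, b == h, (b * sigma v)%g == z12,
  c == v & c == z2].
transitivity (\sum_(v in K) \sum_(h in K) \sum_(u in K) (P v h u)%:R : algC).
  apply: eq_bigr => v vK; apply: eq_bigr => h hK; apply: eq_bigr => u uK.
  have [lM _ _] := lact_ractP ufKM h (sigma v).
  rewrite /mulc3 /= (mulcE ufKM _ aK (sigmaM bK) (groupM uK (groupVr hK)) lM).
  rewrite (mulcE_Kl ufKM _ bK hK (sigmaM vK)) (mulcE_KK ufKM _ cK vK).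
  by rewrite -!natrM !mulnb -!andbA.
transitivity (\sum_(v in K) \sum_(h in K) (P v h (ract K M a (sigma b) * h)%g)%:R : algC).
  apply: eq_bigr => v _; apply: eq_bigr => h hK.
  rewrite (sum_indicator_uniq (e := (ract K M a (sigma b) * h)%g)) ?groupM //.
  by move=> u _ /andP[/eqP-> _]; rewrite mulgVK.
transitivity (\sum_(v in K) (P v b (ract K M a (sigma b) * b)%g)%:R : algC).
  apply: eq_bigr => v _; rewrite (sum_indicator_uniq (e := b)) ?bK //.
  by move=> h _ /and3P[_ _ /andP[/eqP]].
rewrite (sum_indicator_uniq (e := c)) => [|v _ /and5P[_ _ _ _ /andP[/eqP->]] //].
by rewrite cK /P mulgK !eqxx.
Qed.

Lemma cocycle_rhs_coeff (c a b : gT) z : c \in K -> a \in K -> b \in K ->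
  \sum_(k in K) \sum_(v in K) \sum_(u in K)
    mulc3 K M (c, (a * sigma b)%g, b) ((u * sigma v)%g, (v * k^-1)%g, k) z
  = [&& (c * sigma (ract K M a (sigma b) * b))%g == z.1.1, (a * sigma b)%g == z.1.2
      & b == z.2]%:R.
Proof.
move=> cK aK bK; case: z => [[z11 z12] z2] /=.
have [_ rK _] := lact_ractP ufKM a (sigma b).
pose P k v u := [&& c == u, (c * sigma v)%g == z11, ract K M a (sigma b) == (v * k^-1)%g,
  (a * sigma b)%g == z12, b == k & b == z2].
transitivity (\sum_(k in K) \sum_(v in K) \sum_(u in K) (P k v u)%:R : algC).
  apply: eq_bigr => k kK; apply: eq_bigr => v vK; apply: eq_bigr => u uK.
  rewrite /mulc3 /= (mulcE_Kl ufKM _ cK uK (sigmaM vK)).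
  rewrite (mulcE_Kr ufKM _ aK (sigmaM bK) (groupM vK (groupVr kK))) (mulcE_KK ufKM _ bK kK).
  by rewrite -!natrM !mulnb -!andbA.
transitivity (\sum_(k in K) \sum_(v in K) (P k v c)%:R : algC).
  apply: eq_bigr => k _; apply: eq_bigr => v _.
  by rewrite (sum_indicator_uniq (e := c)) ?cK // => u _ /andP[/eqP->].
transitivity (\sum_(k in K) (P k (ract K M a (sigma b) * k)%g c)%:R : algC).
  apply: eq_bigr => k kK.
  rewrite (sum_indicator_uniq (e := (ract K M a (sigma b) * k)%g)) ?groupM //.
  by move=> v _ /and3P[_ _ /andP[/eqP-> _]]; rewrite mulgVK.
rewrite (sum_indicator_uniq (e := b)) => [|k _ /and5P[_ _ _ _ /andP[/eqP->]] //].
by rewrite bK /P mulgK !eqxx.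
Qed.

Lemma TS_cocycle :
  mulH3 K M (tens_r1 K T) (comul_l K M T) = mulH3 K M (tens_1l K T) (comul_r K M T).
Proof.
apply/ffunP => z.
rewrite (mulH3_indicator_sums M z tens_r1_TS comul_l_TS).
rewrite (mulH3_indicator_sums M z tens_1l_TS comul_r_TS).
apply: eq_bigr => a aK; apply: eq_bigr => b bK; apply: eq_bigr => c cK.
by rewrite cocycle_lhs_coeff // cocycle_rhs_coeff // -mulgA sigma_cocycle.
Qed.

End TwistingTensor.

End Twist.

Theorem proposition6 (gT : finGroupType) (Gp Gp' Gm : {group gT})
    (sigma : gT -> gT) :
  unique_fact Gp Gm -> unique_fact Gp' Gm ->
  (forall u, u \in Gp -> sigma u \in Gm) ->
  (Gp' : {set gT}) = [set (sigma u * u)%g | u in Gp] ->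
  quasi_iso Gp' Gp Gm (phiS Gp Gm sigma) (TS Gp sigma).
Proof.
move=> ufKM ufK'M sigmaM K'E.
have [TTinv TinvT] := TS_invertible ufKM sigmaM.
split.
- split; first exact: phiS_linear.
  + exact: phiS_bij ufKM ufK'M sigmaM K'E.
  + exact: phiS_mul ufKM ufK'M sigmaM K'E.
  + exact: phiS_unit ufKM ufK'M K'E.
- exists (TS Gp (fun v => (sigma v)^-1)%g); split => //.
  exact: phiS_comul ufKM ufK'M sigmaM K'E.
- exact: TS_cocycle ufKM sigmaM K'E.
- split; first exact: counit_l_TS ufKM sigmaM.
  exact: counit_r_TS ufKM ufK'M sigmaM K'E.
Qed.
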